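(* Let $P_0=(A_0,B_0)$, $P_1=(A_1,B_1)$ be compatible placements and $m=(\xi_{\mathbb A},\xi_{\mathbb B})$ a compatible motion from $P_0$ to $P_1$. Let $h_{\mathbb A}$, $h_{\mathbb B}$ be the support functions of the traces of $\xi_{\mathbb A}$, $\xi_{\mathbb B}$, and $h_{\mathbb{AB}}(\theta)=h_{\mathbb A}(\theta)+h_{\mathbb B}(\pi+\theta)$. If $m$ is net counter-clockwise then $h_{\mathbb{AB}}(\theta)\ge s$ for all $\theta\in[\theta_0,\theta_1]$; if $m$ is net clockwise then $h_{\mathbb{AB}}(\theta)\ge s$ for all $\theta\in S^1\setminus[\theta_0,\theta_1]$.
   Context: Discs $\mathbb A,\mathbb B$ have radius sum $s>0$. A placement $(A,B)$ of the disc centres is compatible if $\|A-B\|\ge s$. A motion is a pair of continuous rectifiable curves $[0,1]\to\mathbb R^2$; it is compatible if all its placements are compatible. The support function of a compact set $K\subset\mathbb R^2$ is $h_K(\theta)=\max\{x\cos\theta+y\sin\theta:(x,y)\in K\}$. The angle of a placement $(A,B)$ is the angle in $S^1=\mathbb R/2\pi\mathbb Z$ of $A-B$; $\theta_0,\theta_1$ are the angles of $P_0,P_1$; $[\theta_0,\theta_1]$ is the counter-clockwise arc from $\theta_0$ to $\theta_1$. With $I$ the set of angles of the placements of the motion, the motion is net counter-clockwise if $[\theta_0,\theta_1]\subseteq I$ and net clockwise if $S^1\setminus[\theta_0,\theta_1]\subseteq I$. *)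

From Stdlib Require Import Reals Lra ZArith List ClassicalEpsilon.
Open Scope R_scope.

Definition pt := (R * R)%type.

Definition dist2 (p q : pt) : R :=
  sqrt ((fst p - fst q)^2 + (snd p - snd q)^2).

Definition in01 (t : R) : Prop := 0 <= t <= 1.

(* A curve [0,1] -> R^2, represented by a total function of which only the
   values on [0,1] matter. *)
Definition curve := R -> pt.

Definition continuous_on01 (c : curve) : Prop :=
  forall t, in01 t -> forall eps, 0 < eps -> exists delta, 0 < delta /\
    forall t', in01 t' -> Rabs (t' - t) < delta -> dist2 (c t') (c t) < eps.

Fixpoint poly_length (c : curve) (t0 : R) (l : list R) : R :=
  match l with
  | nil => 0
  | t1 :: l' => dist2 (c t0) (c t1) + poly_length c t1 l'
  end.

Fixpoint increasing_from (t0 : R) (l : list R) : Prop :=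
  match l with
  | nil => True
  | t1 :: l' => t0 < t1 /\ increasing_from t1 l'
  end.

Definition partition01 (l : list R) : Prop :=
  increasing_from 0 l /\ last l 0 = 1.

Definition rectifiable (c : curve) : Prop :=
  exists L, forall l, partition01 l -> poly_length c 0 l <= L.

Definition is_curve (c : curve) : Prop := continuous_on01 c /\ rectifiable c.

Definition compatible (s : R) (A B : pt) : Prop := dist2 A B >= s.

Definition compatible_motion (s : R) (xiA xiB : curve) : Prop :=
  is_curve xiA /\ is_curve xiB /\
  forall t, in01 t -> compatible s (xiA t) (xiB t).

Definition motion_from_to (xiA xiB : curve) (A0 B0 A1 B1 : pt) : Prop :=
  xiA 0 = A0 /\ xiB 0 = B0 /\ xiA 1 = A1 /\ xiB 1 = B1.

Definition trace (c : curve) (p : pt) : Prop := exists t, in01 t /\ c t = p.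

(* support function of a (compact) set K: h_K(th) = max over K of
   x cos th + y sin th; defined via choice as the maximum (it exists
   for compact nonempty K). *)
Definition is_support_value (K : pt -> Prop) (th v : R) : Prop :=
  (exists p, K p /\ v = fst p * cos th + snd p * sin th) /\
  (forall p, K p -> fst p * cos th + snd p * sin th <= v).

Definition support (K : pt -> Prop) (th : R) : R :=
  epsilon (inhabits 0) (fun v => is_support_value K th v).

Definition angle_eq (a b : R) : Prop := exists k : Z, a = b + 2 * PI * IZR k.

Definition has_angle (v : pt) (th : R) : Prop :=
  exists r, 0 < r /\ v = (r * cos th, r * sin th).

Definition vsub (p q : pt) : pt := (fst p - fst q, snd p - snd q).

(* th lies on the counter-clockwise arc [th0, th1] of S^1 *)
Definition ccw_arc (th0 th1 th : R) : Prop :=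
  exists d t, 0 <= d < 2 * PI /\ angle_eq th1 (th0 + d) /\
              0 <= t <= d /\ angle_eq th (th0 + t).

Definition in_angle_set (xiA xiB : curve) (th : R) : Prop :=
  exists t, in01 t /\ has_angle (vsub (xiA t) (xiB t)) th.

Definition net_ccw (xiA xiB : curve) (th0 th1 : R) : Prop :=
  forall th, ccw_arc th0 th1 th -> in_angle_set xiA xiB th.

Definition net_cw (xiA xiB : curve) (th0 th1 : R) : Prop :=
  forall th, ~ ccw_arc th0 th1 th -> in_angle_set xiA xiB th.

Definition hAB (xiA xiB : curve) (th : R) : R :=
  support (trace xiA) th + support (trace xiB) (PI + th).

From Stdlib Require Import Reals Lra ClassicalEpsilon.
Open Scope R_scope.

(* If the motion passes through a placement of angle th, say A - B = r u_th with
   r = |A - B| >= s, then h_A(th) + h_B(pi + th) >= <A, u_th> - <B, u_th> = r >= s.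
   A net counter-clockwise (resp. clockwise) motion realizes every angle of the arc
   [th0, th1] (resp. of its complement), which gives both halves of the theorem.
   The support functions are genuine maxima because a continuous curve on [0, 1]
   attains the maximum of each linear functional. *)

Definition dot_dir (p : pt) (th : R) : R := fst p * cos th + snd p * sin th.

Lemma dot_dir_vsub p q th : dot_dir (vsub p q) th = dot_dir p th - dot_dir q th.
Proof. unfold dot_dir, vsub; simpl; ring. Qed.

Lemma dot_dir_antipode p th : dot_dir p (PI + th) = - dot_dir p th.
Proof. unfold dot_dir; rewrite cos_plus, sin_plus, cos_PI, sin_PI; ring. Qed.

Lemma dot_dir_polar r th : dot_dir (r * cos th, r * sin th) th = r.
Proof.
  unfold dot_dir; simpl.
  pose proof (sin2_cos2 th) as Hsc; unfold Rsqr in Hsc.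
  replace r with (r * (sin th * sin th + cos th * cos th)) at 3 by (rewrite Hsc; ring).
  ring.
Qed.

Lemma norm_polar r th : 0 <= r -> sqrt ((r * cos th) ^ 2 + (r * sin th) ^ 2) = r.
Proof.
  intros Hr.
  pose proof (sin2_cos2 th) as Hsc; unfold Rsqr in Hsc.
  replace ((r * cos th) ^ 2 + (r * sin th) ^ 2)
    with (r ^ 2 * (sin th * sin th + cos th * cos th)) by ring.
  rewrite Hsc, Rmult_1_r. now apply sqrt_pow2.
Qed.

Lemma Rabs_dot_dir_le p th :
  Rabs (dot_dir p th) <= sqrt (fst p ^ 2 + snd p ^ 2).
Proof.
  unfold dot_dir; set (a := fst p); set (b := snd p).
  rewrite <- sqrt_Rsqr_abs. apply sqrt_le_1_alt.
  pose proof (sin2_cos2 th) as Hsc; unfold Rsqr in *.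
  assert (Lagrange : a ^ 2 + b ^ 2 = (a * cos th + b * sin th) * (a * cos th + b * sin th)
                                     + (a * sin th - b * cos th) ^ 2).
  { replace (a ^ 2 + b ^ 2) with ((a ^ 2 + b ^ 2) * (sin th * sin th + cos th * cos th))
      by (rewrite Hsc; ring).
    ring. }
  rewrite Lagrange. pose proof (pow2_ge_0 (a * sin th - b * cos th)). lra.
Qed.

(* Retraction of R onto [0,1], to feed continuity on [0,1] to [continuity_ab_maj]. *)
Definition clamp01 (t : R) : R := Rmax 0 (Rmin 1 t).

Lemma in01_clamp01 t : in01 (clamp01 t).
Proof. unfold clamp01, in01, Rmax, Rmin; repeat destruct Rle_dec; lra. Qed.

Lemma clamp01_id t : in01 t -> clamp01 t = t.
Proof. unfold clamp01, in01, Rmax, Rmin; intros; repeat destruct Rle_dec; lra. Qed.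

Lemma clamp01_lipschitz t t' : Rabs (clamp01 t' - clamp01 t) <= Rabs (t' - t).
Proof.
  unfold clamp01, Rmax, Rmin, Rabs; repeat destruct Rle_dec; repeat destruct Rcase_abs; lra.
Qed.

Lemma continuity_dot_dir_clamp01 (c : curve) th : continuous_on01 c ->
  forall x, continuity_pt (fun t => dot_dir (c (clamp01 t)) th) x.
Proof.
  intros Hc x eps Heps.
  destruct (Hc (clamp01 x) (in01_clamp01 x) eps Heps) as [d [Hd Hclose]].
  exists d; split; [exact Hd|]. intros y [_ Hy]; simpl in *; unfold R_dist in *.
  eapply Rle_lt_trans; [|apply (Hclose (clamp01 y) (in01_clamp01 y))].
  - rewrite <- dot_dir_vsub. apply Rabs_dot_dir_le.
  - eapply Rle_lt_trans; [apply clamp01_lipschitz | exact Hy].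
Qed.

Lemma support_value_exists (c : curve) th : continuous_on01 c ->
  exists v, is_support_value (trace c) th v.
Proof.
  intros Hc.
  set (f := fun t => dot_dir (c (clamp01 t)) th).
  destruct (continuity_ab_maj f 0 1) as [M [HM HM01]]; [lra| |].
  { intros x _. now apply continuity_dot_dir_clamp01. }
  exists (f M); split.
  - exists (c (clamp01 M)); split; [|reflexivity].
    exists (clamp01 M); split; [apply in01_clamp01 | reflexivity].
  - intros p [t [Ht <-]]. specialize (HM t Ht). unfold f in HM.
    now rewrite clamp01_id in HM.
Qed.

Lemma dot_dir_le_support (c : curve) th t : continuous_on01 c -> in01 t ->
  dot_dir (c t) th <= support (trace c) th.
Proof.
  intros Hc Ht.
  assert (Hspec : is_support_value (trace c) th (support (trace c) th)).
  { unfold support. apply epsilon_spec. now apply support_value_exists. }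
  apply (proj2 Hspec). now exists t.
Qed.

Lemma hAB_ge_of_in_angle_set s xiA xiB th : compatible_motion s xiA xiB ->
  in_angle_set xiA xiB th -> hAB xiA xiB th >= s.
Proof.
  intros [[HA _] [[HB _] Hcomp]] [t [Ht [r [Hr Hv]]]].
  assert (Hdist : r >= s).
  { pose proof (Hcomp t Ht) as Hd. unfold compatible, dist2 in Hd.
    unfold vsub in Hv. injection Hv as E1 E2. rewrite E1, E2, norm_polar in Hd; lra. }
  assert (Hproj : dot_dir (xiA t) th - dot_dir (xiB t) th = r).
  { now rewrite <- dot_dir_vsub, Hv, dot_dir_polar. }
  pose proof (dot_dir_le_support xiA th t HA Ht).
  pose proof (dot_dir_le_support xiB (PI + th) t HB Ht).
  rewrite dot_dir_antipode in *.
  unfold hAB. lra.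
Qed.

Theorem mainTheorem4 (s : R) (A0 B0 A1 B1 : pt) (xiA xiB : curve)
  (th0 th1 : R) :
  0 < s ->
  compatible s A0 B0 -> compatible s A1 B1 ->
  compatible_motion s xiA xiB ->
  motion_from_to xiA xiB A0 B0 A1 B1 ->
  has_angle (vsub A0 B0) th0 -> has_angle (vsub A1 B1) th1 ->
  (net_ccw xiA xiB th0 th1 ->
     forall th, ccw_arc th0 th1 th -> hAB xiA xiB th >= s) /\
  (net_cw xiA xiB th0 th1 ->
     forall th, ~ ccw_arc th0 th1 th -> hAB xiA xiB th >= s).
Proof.
  intros _ _ _ Hm _ _ _.
  split; intros Hnet th Hth; apply (hAB_ge_of_in_angle_set s); auto.
Qed.
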